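(* Let $p$ be an odd prime and $n\ge 1$ an integer. Let $\phi:\mathbb{P}^1(\mathbb{Q})\to\mathbb{Z}/p\mathbb{Z}$ be a $\Gamma_1(p)$-invariant function (a weight-$0$ boundary symbol of level $\Gamma_1(p)$ with values in $\mathbb{Z}/p\mathbb{Z}$, evaluated at $1$) such that $$\sum_{a\in(\mathbb{Z}/p\mathbb{Z})^\times}\big(\phi(\{\infty\})-\phi(\{a/p\})\big)\not\equiv 0\pmod p.$$ Then $\lambda(\theta_{n,\phi})=p^n-1$.
   Context: For $m\ge1$ let $G_m=\mathrm{Gal}(\mathbb{Q}(\mu_{p^m})/\mathbb{Q})$, identified with $(\mathbb{Z}/p^m\mathbb{Z})^\times$ via $a\mapsto\sigma_a$, $\sigma_a(\zeta)=\zeta^a$. Let $K_n\subset\mathbb{Q}(\mu_{p^{n+1}})$ be the unique subfield of degree $p^n$ over $\mathbb{Q}$, $\mathcal{G}_n=\mathrm{Gal}(K_n/\mathbb{Q})$ (cyclic of order $p^n$), and $\pi_n:G_{n+1}\to\mathcal{G}_n$ the restriction map. For such $\phi$, the level-$n$ Mazur–Tate element $\theta_{n,\phi}\in(\mathbb{Z}/p\mathbb{Z})[\mathcal{G}_n]$ is the image under $\pi_n$ of $\sum_{a\in(\mathbb{Z}/p^{n+1}\mathbb{Z})^\times}\big(\phi(\{\infty\})-\phi(\{a/p^{n+1}\})\big)\sigma_a$. Choosing a generator $\gamma_n$ of $\mathcal{G}_n$ and setting $T=\gamma_n-1$, every $F\in(\mathbb{Z}/p\mathbb{Z})[\mathcal{G}_n]$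 is uniquely $F=\sum_{i=0}^{p^n-1}a_iT^i$ with $a_i\in\mathbb{Z}/p\mathbb{Z}$; its $\lambda$-invariant is $\lambda(F)=\min\{i:a_i\ne0\}$ ($\infty$ if $F=0$), independent of the choice of $\gamma_n$. *)

From HB Require Import structures.
From mathcomp Require Import all_boot all_order all_algebra all_fingroup.
Set Implicit Arguments. Unset Strict Implicit. Unset Printing Implicit Defensive.
Import Order.TTheory GRing.Theory Num.Theory.
Local Open Scope ring_scope.

(* P^1(Q): None is the point at infinity, Some r the rational r. *)
Definition P1Q := option rat.

(* Moebius action of the integer matrix [[a,b],[c,d]] on P^1(Q). *)
Definition mob (a b c d : int) (x : P1Q) : P1Q :=
  match x with
  | None => if c == 0 then None else Some (a%:~R / c%:~R)
  | Some r => let den := c%:~R * r + d%:~R in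
              if den == 0 then None else Some ((a%:~R * r + b%:~R) / den)
  end.

Definition Gamma1_invariant (p : nat) (T : Type) (phi : P1Q -> T) : Prop :=
  forall a b c d : int, a * d - b * c = 1 ->
    (c = 0 %[mod p%:Z])%Z -> (a = 1 %[mod p%:Z])%Z -> (d = 1 %[mod p%:Z])%Z ->
    forall x, phi (mob a b c d x) = phi x.

(* G_{n+1} = Gal(Q(mu_{p^{n+1}})/Q) identified with (Z/p^{n+1}Z)^x. *)
Definition Um (p n : nat) := {unit 'Z_(p ^ n.+1)}.

(* Gal(Q(mu_{p^{n+1}})/K_n): the unique subgroup of order p-1 of the cyclic
   group G_{n+1}, i.e. the elements killed by p-1. *)
Definition Hn (p n : nat) : {group Um p n} :=
  <<[set u : Um p n | (u ^+ p.-1 == 1)%g]>>%G.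

(* calG_n = Gal(K_n/Q) = G_{n+1} / Gal(Q(mu_{p^{n+1}})/K_n), and the restriction pi_n. *)
Definition Gn (p n : nat) := coset_of (Hn p n).
Definition pin (p n : nat) (u : Um p n) : Gn p n := coset (Hn p n) u.

(* Group ring R[G] as finitely supported coefficient functions. *)
Definition conv (G : finGroupType) (R : nzRingType) (F1 F2 : {ffun G -> R})
  : {ffun G -> R} := [ffun x => \sum_(y : G) F1 y * F2 (y^-1 * x)%g].
Definition delta (G : finGroupType) (R : nzRingType) (g : G) : {ffun G -> R} :=
  [ffun x => (x == g)%:R].
Definition Tgen (G : finGroupType) (R : nzRingType) (gam : G) : {ffun G -> R} :=
  delta R gam - delta R 1%g.
Definition Tpow (G : finGroupType) (R : nzRingType) (gam : G) (i : nat)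
  : {ffun G -> R} := iter i (conv (Tgen R gam)) (delta R 1%g).

(* lambda(F) = k: for (every) generator gamma of G, writing
   F = sum_{i < #|G|} a_i T^i (T = gamma - 1), the least i with a_i != 0 is k. *)
Definition lambda_is (G : finGroupType) (R : nzRingType) (F : {ffun G -> R})
  (k : nat) : Prop :=
  forall gam : G, <[gam]>%g = [set: G] ->
    exists a : nat -> R,
      F = \sum_(i < #|G|) [ffun x => a i * Tpow R gam i x] /\
      (forall i, (i < k)%N -> a i = 0) /\ a k != 0.

(* The level-n Mazur-Tate element theta_{n,phi} in (Z/pZ)[calG_n]: the image under
   pi_n of sum_a (phi(oo) - phi(a/p^{n+1})) sigma_a, a in (Z/p^{n+1}Z)^x
   (representative of a taken in [0, p^{n+1})). *)
Definition theta (p n : nat) (phi : P1Q -> 'F_p) : {ffun Gn p n -> 'F_p} :=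
  [ffun g => \sum_(u : Um p n | pin u == g)
     (phi None - phi (Some ((val (val u) : nat)%:R / (p ^ n.+1)%:R)))].

From HB Require Import structures.
From mathcomp Require Import all_boot all_order all_algebra all_fingroup cyclic.
From mathcomp Require Import ring zify.
Set Implicit Arguments. Unset Strict Implicit. Unset Printing Implicit Defensive.
Import Order.TTheory GRing.Theory Num.Theory.

(* Each fibre of pi_n is a coset of the subgroup Hn of order p - 1, and
   reduction mod p maps it bijectively onto (Z/pZ)^x: Hn meets the kernel of
   reduction, a p-group, trivially, and p^n-th powers land in Hn without
   changing residues.  By Gamma_1(p)-invariance phi(a/p^(n+1)) only depends on
   a mod p, so theta_(n,phi) is c times the sum of all elements of G_n, where
   c is the nonzero sum of the hypothesis.  Since |G_n| = p^n and
   (X - 1)^(p^n) = X^(p^n) - 1 in characteristic p, that sum is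
   (gamma - 1)^(p^n - 1), whence lambda = p^n - 1. *)

Lemma exp1Dn_sqr c k : exists t, (1 + c) ^ k = 1 + k * c + c ^ 2 * t.
Proof.
elim: k => [|k [t IH]]; first by exists 0; rewrite expn0 muln0 addn0.
exists (k + t + c * t); rewrite expnS IH !(expnS c) expn0; nia.
Qed.

Lemma expn_ppow_mod1 p x j : 1 < p -> x = 1 %[mod p] ->
  x ^ (p ^ j) = 1 %[mod p ^ j.+1].
Proof.
move=> p_gt1 x1; suff [m ->] : exists m, x ^ (p ^ j) = 1 + p ^ j.+1 * m.
  by rewrite addnC mulnC modnMDl.
elim: j => [|j [m IH]].
  exists (x %/ p).
  by rewrite expn0 !expn1 {1}(divn_eq x p) x1 modn_small // addnC mulnC.
have [t Ht] := exp1Dn_sqr (p ^ j.+1 * m) p.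
exists (m + p ^ j * m ^ 2 * t).
rewrite expnS mulnC expnM IH Ht !expnS; nia.
Qed.

Lemma fermat_little_ppow p a k : prime p -> a ^ (p ^ k) = a %[mod p].
Proof.
move=> p_pr; elim: k => [|k IH]; first by rewrite expn0 expn1.
by rewrite expnS mulnC expnM -modnXm IH modnXm fermat_little.
Qed.

Section UnitsModPrimePower.
Variables (p n : nat).
Hypothesis p_pr : prime p.
Local Notation N := (p ^ n.+1).
Local Notation U := (Um p n).

Let p_gt1 : 1 < p := prime_gt1 p_pr.

Let N_gt1 : 1 < N.
Proof. by rewrite (leq_trans p_gt1) // -{1}(expn1 p) leq_exp2l. Qed.

Definition unitn (u : U) : nat := val (val u).
Definition residue (u : U) : nat := unitn u %% p.

Lemma unitn_inj : injective unitn.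
Proof. by move=> u v /val_inj /val_inj. Qed.

Lemma unitnM u v : unitn (u * v)%g = unitn u * unitn v %% N.
Proof. by rewrite /unitn /=; congr (_ %% _); apply: Zp_cast. Qed.

Lemma unitnX u k : unitn (u ^+ k)%g = unitn u ^ k %% N.
Proof. by rewrite /unitn unit_Zp_expg /=; congr (_ %% _); apply: Zp_cast. Qed.

Lemma coprime_unitn u : coprime N (unitn u).
Proof. by have := valP u; rewrite -[val u]natr_Zp unitZpE. Qed.

Lemma residueM u v : residue (u * v)%g = residue u * residue v %% p.
Proof. by rewrite /residue unitnM modn_dvdm ?dvdn_exp // modnMm. Qed.

Lemma residueX u k : residue (u ^+ k)%g = residue u ^ k %% p.
Proof. by rewrite /residue unitnX modn_dvdm ?dvdn_exp // modnXm. Qed.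

Lemma residue1 : residue 1%g = 1.
Proof. by rewrite /residue /unitn /= modn_small. Qed.

Lemma residue_lt u : residue u < p.
Proof. by rewrite ltn_pmod ?prime_gt0. Qed.

Lemma coprime_residue u : coprime (residue u) p.
Proof.
rewrite coprime_modl coprime_sym -(@coprime_pexpl n.+1) //.
exact: coprime_unitn.
Qed.

Lemma residue_neq0 u : residue u != 0.
Proof.
apply: contraTneq (coprime_residue u) => ->.
by rewrite /coprime gcd0n gtn_eqF.
Qed.

Lemma card_Um : #|[set: U]| = p.-1 * p ^ n.
Proof.
by have := card_units_Zp (ltnW N_gt1); rewrite /units_Zp totient_pfactor.
Qed.

Lemma residue_eq1_expg u : residue u = 1 -> (u ^+ (p ^ n))%g = 1%g.
Proof.
move=> u1; apply: unitn_inj; rewrite unitnX expn_ppow_mod1 //.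
  exact: modn_small.
by rewrite -/(residue u) u1 modn_small.
Qed.

Lemma Hn_group_set : group_set [set u : U | (u ^+ p.-1 == 1)%g].
Proof.
apply/group_setP; split=> [|x y]; first by rewrite inE expg1n.
rewrite !inE => /eqP hx /eqP hy.
by rewrite expgMn ?hx ?hy ?mulg1 //; apply: unit_Zp_mulgC.
Qed.

Lemma mem_Hn u : (u \in Hn p n) = (u ^+ p.-1 == 1)%g.
Proof. by rewrite /Hn /= gen_set_id ?Hn_group_set // inE. Qed.

Lemma norm_Hn u : u \in 'N(Hn p n)%g.
Proof.
by rewrite (subsetP (sub_abelian_norm (units_Zp_abelian _) (subsetT _))) ?inE.
Qed.

Lemma expg_ppow_Hn u : (u ^+ (p ^ n))%g \in Hn p n.
Proof. by rewrite mem_Hn -expgM mulnC -card_Um expg_cardG ?inE. Qed.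

Lemma residue_expg_ppow u : residue (u ^+ (p ^ n))%g = residue u.
Proof. by rewrite residueX fermat_little_ppow // modn_small ?residue_lt. Qed.

Lemma pin_residue_inj u v : pin u = pin v -> residue u = residue v -> u = v.
Proof.
move=> puv ruv; set h := (u^-1 * v)%g.
have hH : h \in Hn p n.
  apply: coset_idr; first exact: norm_Hn.
  by rewrite morphM ?morphV ?groupV ?norm_Hn //= -/(pin u) -/(pin v) puv mulVg.
have h1 : residue h = 1 by rewrite residueM -ruv -residueM mulVg residue1.
have : #[h]%g %| gcdn (p ^ n) p.-1.
  by rewrite dvdn_gcd !order_dvdn residue_eq1_expg // eqxx -mem_Hn.
have /eqP -> : coprime (p ^ n) p.-1.
  by apply: coprimeXl; rewrite -{1}(prednK (prime_gt0 p_pr)) coprimeSn.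
by rewrite dvdn1 order_eq1 => /eqP h_1; rewrite -(mulKVg u v) -/h h_1 mulg1.
Qed.

Lemma pin_residue_surj (g : Gn p n) b : 0 < b < p ->
  exists u, pin u = g /\ residue u = b.
Proof.
case/andP=> b_gt0 b_lt_p.
have b_unit : ((b%:R : 'Z_N) \is a GRing.unit)%R.
  rewrite unitZpE // coprime_pexpl // prime_coprime //.
  by apply: contraL b_lt_p => /dvdn_leq; rewrite -leqNgt; apply.
pose z : U := FinRing.Unit b_unit; pose x := repr g.
exists (x * (x^-1 * z) ^+ (p ^ n))%g; split.
  by rewrite /pin coset_kerr ?expg_ppow_Hn ?coset_reprK.
rewrite residueM residue_expg_ppow residueM modnMmr mulnA -modnMml -residueM.
rewrite mulgV residue1 mul1n /residue /unitn /= val_Zp_nat //.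
have b_lt_N : b < N by rewrite (leq_trans b_lt_p) // -{1}(expn1 p) leq_exp2l.
by rewrite !modn_small.
Qed.

Lemma sum_fibre_pin (V : nmodType) (f : nat -> V) (g : Gn p n) :
  (\sum_(u | pin u == g) f (residue u) = \sum_(1 <= b < p) f b)%R.
Proof.
pose r (u : U) : 'I_p := Ordinal (residue_lt u).
have r_inj : {in [set u | pin u == g] &, injective r}.
  move=> u v; rewrite !inE => /eqP pu /eqP pv /(congr1 val) /=.
  by apply: pin_residue_inj; rewrite pu pv.
have r_im : r @: [set u | pin u == g] = [set b : 'I_p | b != 0 :> nat].
  apply/setP => b; rewrite inE; apply/imsetP/idP => [[u _ ->]|b_neq0].
    exact: residue_neq0.
  have [|u [pu ru]] := pin_residue_surj g (b := b).
    by rewrite lt0n b_neq0 ltn_ord.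
  by exists u; [rewrite inE pu | apply: val_inj => /=; rewrite ru].
rewrite -big_set /= -(big_imset (fun b : 'I_p => f b) r_inj) r_im.
rewrite (eq_bigl (fun b : 'I_p => b != 0 :> nat)) => [|b]; last by rewrite inE.
rewrite -(big_mkord (fun b => b != 0)) big_mkcond big_ltn ?prime_gt0 //= add0r.
by apply: eq_big_nat => b /andP[b_gt0 _]; rewrite -lt0n b_gt0.
Qed.

Lemma card_Gn : #|{: Gn p n}| = p ^ n.
Proof.
have fibre_card (g : Gn p n) : #|[set u | pin u == g]| = p.-1.
  have := sum_fibre_pin (fun=> 1) g.
  by rewrite sum_nat_const_nat muln1 subn1 sum1_card cardsE.
have : #|{: U}| = #|{: Gn p n}| * p.-1.
  rewrite -sum1_card (partition_big (@pin p n) xpredT) //=.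
  under eq_bigr => g _ do rewrite sum1dep_card fibre_card.
  by rewrite sum_nat_const.
have p1_gt0 : 0 < p.-1 by rewrite -subn1 subn_gt0.
rewrite -cardsT card_Um mulnC => card_eq; apply/eqP.
by rewrite -(eqn_pmul2r p1_gt0) -card_eq.
Qed.

End UnitsModPrimePower.

Local Open Scope ring_scope.

Section GroupRingPowersOfT.
Variables (G : finGroupType) (R : nzRingType) (gam : G).

Definition group_poly (K : nat) (P : {poly R}) : {ffun G -> R} :=
  [ffun x => \sum_(i < K) P`_i * (x == (gam ^+ i)%g)%:R].

Lemma conv_Tgen (F : {ffun G -> R}) x :
  conv (Tgen R gam) F x = F (gam^-1 * x)%g - F x.
Proof.
have conv_delta g : \sum_y (y == g)%:R * F (y^-1 * x)%g = F (g^-1 * x)%g.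
  rewrite (bigD1 g) //= eqxx mul1r big1 ?addr0 // => y /negPf ->.
  by rewrite mul0r.
rewrite ffunE; under eq_bigr => y _ do rewrite !ffunE mulrBl.
by rewrite sumrB !conv_delta invg1 mul1g.
Qed.

Lemma conv_Tgen_group_poly K (P : {poly R}) : (size P <= K)%N ->
  conv (Tgen R gam) (group_poly K P) = group_poly K.+1 (('X - 1) * P).
Proof.
move=> sizeP; apply/ffunP => x; rewrite conv_Tgen !ffunE.
under [in RHS]eq_bigr => i _ do rewrite mulrBl mul1r coefB coefXM mulrBl.
rewrite sumrB big_ord_recl /= mul0r add0r.
rewrite [X in _ = _ - X]big_ord_recr /= (nth_default 0 sizeP) mul0r addr0.
congr (_ - _); apply: eq_bigr => i _.
by rewrite /bump /= add1n (canF_eq (mulKVg gam)) expgS.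
Qed.

Lemma Tpow_group_poly i : Tpow R gam i = group_poly i.+1 (('X - 1) ^+ i).
Proof.
elim: i => [|i IH].
  by apply/ffunP => x; rewrite !ffunE big_ord1 expr0 coef1 mul1r expg0.
rewrite /Tpow iterS -/(Tpow R gam i) IH conv_Tgen_group_poly ?exprS //.
by rewrite -polyC1 size_exp_XsubC.
Qed.

End GroupRingPowersOfT.

Lemma XsubC1_exp_pred_ppow (F : fieldType) p k : prime p -> p \in [pchar F] ->
  ('X - 1) ^+ (p ^ k).-1 = \sum_(i < p ^ k) ('X : {poly F}) ^+ i.
Proof.
move=> p_pr pF; have pk_gt0 : (0 < p ^ k)%N by rewrite expn_gt0 prime_gt0.
have pchar_pk : [pchar {poly F}].-nat (p ^ k)%N.
  have pFX : p \in [pchar {poly F}] by rewrite pchar_poly.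
  by rewrite pnatX (eq_pnat _ (pcharf_eq pFX)) pnat_id.
apply: (@mulfI _ ('X - 1)); first by rewrite -polyC1 polyXsubC_eq0.
by rewrite -exprS prednK // -subrX1 exprDn_pchar // exprNn_pchar // expr1n.
Qed.

Lemma Tpow_order_pred (F : fieldType) (G : finGroupType) (gam : G) p k :
  prime p -> p \in [pchar F] -> #[gam]%g = (p ^ k)%N ->
  {in <[gam]>%g, forall x, Tpow F gam (p ^ k).-1 x = 1}.
Proof.
move=> p_pr pF gam_order x /cyclePmin[m m_lt ->{x}].
have pk_gt0 : (0 < p ^ k)%N by rewrite expn_gt0 prime_gt0.
rewrite Tpow_group_poly prednK // XsubC1_exp_pred_ppow // ffunE.
have coef_ones (i : 'I_(p ^ k)) : (\sum_(j < p ^ k) 'X^j)`_i = 1 :> F.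
  rewrite coef_sum (bigD1 i) //= coefXn eqxx big1 ?addr0 // => j /negPf.
  by rewrite coefXn eq_sym -val_eqE /= => ->.
under eq_bigr => i _ do rewrite coef_ones mul1r.
rewrite gam_order in m_lt.
rewrite (bigD1 (Ordinal m_lt)) //= eqxx big1 ?addr0 //.
move=> i /negPf; rewrite eq_expg_mod_order gam_order !modn_small //.
by rewrite eq_sym -val_eqE /= => ->.
Qed.

Lemma lambda_is_const (F : fieldType) (G : finGroupType) p k (c : F) :
  prime p -> p \in [pchar F] -> #|G| = (p ^ k)%N -> c != 0 ->
  lambda_is [ffun _ : G => c] (p ^ k - 1).
Proof.
move=> p_pr pF card_G c_neq0 gam gam_gen.
have gam_order : #[gam]%g = (p ^ k)%N by rewrite /order gam_gen cardsT.
have top_lt : (p ^ k - 1 < #|G|)%N.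
  by rewrite card_G ltn_subrL expn_gt0 (prime_gt0 p_pr).
exists (fun i => if i == (p ^ k - 1)%N then c else 0); split; last split.
- apply/ffunP => x; rewrite sum_ffunE (bigD1 (Ordinal top_lt)) //= !ffunE eqxx.
  rewrite big1 => [|i]; last first.
    by rewrite ffunE -val_eqE /= => /negPf ->; rewrite mul0r.
  by rewrite addr0 subn1 (Tpow_order_pred p_pr) ?mulr1 // gam_gen inE.
- by move=> i i_lt; rewrite ltn_eqF.
- by rewrite eqxx.
Qed.

(* The matrix is built from the Bezout relations v b + w p = 1 and
   s a + r M = 1; its determinant is their product. *)
Lemma Gamma1_cusp_transport (p M a b : int) :
  (p %| M)%Z -> (p %| a - b)%Z -> coprimez b p -> coprimez a M ->
  exists al be ga de : int, [/\ al * de - be * ga = 1,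
    (ga = 0 %[mod p])%Z, (al = 1 %[mod p])%Z, (de = 1 %[mod p])%Z &
    (al * b + be * p, ga * b + de * p) = (a, M)].
Proof.
move=> /dvdzP[m {M}->] /dvdzP[t /(canRL (subrK b)) {a}->].
move=> /coprimezP[[v w] /= vw] /coprimezP[[s r] /= sr].
have congr_p x y q : x - y = q * p -> (x = y %[mod p])%Z.
  by move=> xy; apply/eqP; rewrite eqz_mod_dvd xy dvdz_mull.
pose a := t * p + b; pose M := m * p.
exists (a * v + r * p), (a * w - r * b), (M * v - s * p), (s * b + M * w).
split.
- have -> : (a * v + r * p) * (s * b + M * w)
              - (a * w - r * b) * (M * v - s * p)
            = (s * a + r * M) * (v * b + w * p) by rewrite /a /M; ring.
  by rewrite sr vw mulr1.
- by apply: (congr_p _ _ (m * v - s)); rewrite /M; ring.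
- by apply: (congr_p _ _ (v * t + r - w)); rewrite -vw /a; ring.
- by apply: (congr_p _ _ (m * w - s * t - m * r)); rewrite -sr /a /M; ring.
- by congr pair; rewrite -[RHS]mulr1 -vw /a /M; ring.
Qed.

Lemma mob_frac (al be ga de x y : int) : y != 0 -> ga * x + de * y != 0 ->
  mob al be ga de (Some (x%:~R / y%:~R)) =
  Some ((al * x + be * y)%:~R / (ga * x + de * y)%:~R).
Proof.
move=> y_neq0 den_neq0; have yR_neq0 : y%:~R != 0 :> rat by rewrite intr_eq0.
have frac_lin (c d : int) : c%:~R * (x%:~R / y%:~R) + d%:~R
    = (c * x + d * y)%:~R / y%:~R :> rat.
  by rewrite intrD !intrM; field.
rewrite /mob !frac_lin mulf_eq0 invr_eq0 (negPf yR_neq0) intr_eq0 orbF.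
rewrite (negPf den_neq0); congr Some; field.
by rewrite -!intrM -intrD intr_eq0 den_neq0 yR_neq0.
Qed.

Lemma Gamma1_invariant_frac p (T : Type) (phi : P1Q -> T) (M a : nat) :
  prime p -> Gamma1_invariant p phi -> (0 < M)%N -> (p %| M)%N -> coprime a M ->
  phi (Some (a%:R / M%:R)) = phi (Some ((a %% p)%:R / p%:R)).
Proof.
move=> p_pr phi_inv M_gt0 pM aM.
have p_ab : (p %| a%:Z - (a %% p)%N%:Z)%Z.
  apply/dvdzP; exists (a %/ p)%N%:Z.
  by rewrite {1}(divn_eq a p) PoszD PoszM addrK.
have ap : coprimez (a %% p)%N%:Z p.
  by change (coprime (a %% p) p); rewrite coprime_modl (coprime_dvdr pM).
have [al [be [ga [de [det ga0 al1 de1 [num den]]]]]] :=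
  Gamma1_cusp_transport (pM : (p%:Z %| M%:Z)%Z) p_ab ap aM.
have p_neq0 : p%:Z != 0 by rewrite eqz_nat -lt0n prime_gt0.
have den_neq0 : ga * (a %% p)%N%:Z + de * p != 0 by rewrite den eqz_nat -lt0n.
by rewrite -[RHS](phi_inv _ _ _ _ det ga0 al1 de1) !pmulrn mob_frac // num den.
Qed.

Lemma theta_constant p n (phi : P1Q -> 'F_p) (g : Gn p n) :
  prime p -> Gamma1_invariant p phi ->
  theta n phi g = \sum_(1 <= a < p) (phi None - phi (Some (a%:R / p%:R))).
Proof.
move=> p_pr phi_inv; rewrite ffunE -(sum_fibre_pin p_pr _ g).
apply: eq_bigr => u _; rewrite (Gamma1_invariant_frac p_pr phi_inv) //.
- by rewrite expn_gt0 prime_gt0.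
- by rewrite dvdn_exp.
- by rewrite coprime_sym coprime_unitn.
Qed.

Theorem theorem4p7 (p n : nat) (phi : P1Q -> 'F_p) :
  prime p -> odd p -> (0 < n)%N -> Gamma1_invariant p phi ->
  \sum_(1 <= a < p) (phi None - phi (Some (a%:R / p%:R))) != 0 ->
  lambda_is (@theta p n phi) (p ^ n - 1)%N.
Proof.
move=> p_pr _ _ phi_inv; set c := \sum_(1 <= a < p) _ => c_neq0.
have -> : theta n phi = [ffun=> c].
  by apply/ffunP => g; rewrite (theta_constant _ p_pr phi_inv) ffunE.
exact: lambda_is_const p_pr (pchar_Fp p_pr) (card_Gn n p_pr) c_neq0.
Qed.
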